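(* Consider a Markov decision process with finite state space $\mathcal{S}$ such that, for every allowed policy $\pi$, the induced Markov chain on $\mathcal{S}$ is ergodic and reversible with respect to its stationary distribution $\mathfrak{p}_\pi$. Let $\mathfrak{p}_{\min}=\min_{s\in\mathcal{S},\pi}\mathfrak{p}_\pi(s)$, and let $\lambda_\star<1$ be an upper bound, valid for every allowed policy $\pi$, on the second largest eigenvalue of the one-step transition matrix $P_\pi=[\mathbb{P}(s_{t+1}=j\mid s_t=i,\pi)]_{ij}$. Let $\epsilon>0$ and $\gamma\in(0,1)$. If \[ \gamma\ \ge\ \frac{1-\mathfrak{p}_{\min}\,\epsilon}{1-\lambda_\star\,\mathfrak{p}_{\min}\,\epsilon}, \] then $\|\Delta_{z,z'}\|_{\mathrm{TV}}\le\epsilon$ for all $z,z'\in\mathcal{S}$ and every allowed policy $\pi$.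
   Context: For a policy $\pi$ and discount factor $\gamma$, the discounted state occupation measure from $z$ is $\rho_z(s)=(1-\gamma)\sum_{t\ge0}\gamma^t\,\mathbb{P}(s_t=s\mid s_0=z,\pi)$, and $\Delta_{z,z'}=\rho_z-\rho_{z'}$ with total variation norm $\|\Delta_{z,z'}\|_{\mathrm{TV}}=\tfrac12\sum_{s\in\mathcal{S}}|\Delta_{z,z'}(s)|$. Reversibility means $\mathfrak{p}_\pi(z)\,\mathbb{P}(s_{1}=z'\mid s_0=z,\pi)=\mathfrak{p}_\pi(z')\,\mathbb{P}(s_{1}=z\mid s_0=z',\pi)$ for all $z,z'$. The ''second largest eigenvalue'' means the largest eigenvalue of $P_\pi$ other than the eigenvalue $1$ (counted once); all eigenvalues of $P_\pi$ are real by reversibility. *)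

From HB Require Import structures.
From mathcomp Require Import all_boot all_order all_algebra.
From mathcomp Require Import all_classical all_reals all_analysis.
Set Implicit Arguments. Unset Strict Implicit. Unset Printing Implicit Defensive.
Import Order.TTheory GRing.Theory Num.Theory.
Local Open Scope ring_scope.

Section MDP.
Variables (R : realType) (n m : nat).
(* K a : 'M_n is the transition matrix under action a:
   K a i j = P(s_{t+1} = j | s_t = i, a_t = a).
   A (stationary, Markov) policy pi : 'M_(n,m), pi i a = P(a_t = a | s_t = i). *)

Definition stochastic_mx (p q : nat) (M : 'M[R]_(p, q)) : Prop :=
  (forall i j, 0 <= M i j) /\ (forall i, \sum_j M i j = 1).

Definition mdp_kernel (K : 'I_m -> 'M[R]_n) : Prop :=
  forall a, stochastic_mx (K a).

Definition induced_chain (K : 'I_m -> 'M[R]_n) (pi : 'M[R]_(n, m)) : 'M[R]_n :=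
  \matrix_(i, j) \sum_a pi i a * K a i j.

Definition irreducible_mx (P : 'M[R]_n) : Prop :=
  forall i j, exists t : nat, 0 < (P ^+ t) i j.

Definition aperiodic_mx (P : 'M[R]_n) : Prop :=
  forall i (d : nat),
    (forall t : nat, (0 < t)%N -> 0 < (P ^+ t) i i -> (d %| t)%N) -> d = 1%N.

Definition ergodic_mx (P : 'M[R]_n) : Prop :=
  irreducible_mx P /\ aperiodic_mx P.

Definition stationary_distr (P : 'M[R]_n) (p : 'rV[R]_n) : Prop :=
  (forall s, 0 <= p 0 s) /\ \sum_s p 0 s = 1 /\ p *m P = p.

Definition reversible_wrt (P : 'M[R]_n) (p : 'rV[R]_n) : Prop :=
  forall z z', p 0 z * P z z' = p 0 z' * P z' z.

(* lam is an upper bound on the second largest eigenvalue of P: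
   listing the (real, by reversibility) eigenvalues of P with multiplicity,
   i.e. the roots of the characteristic polynomial, at most one of them
   (the eigenvalue 1, counted once) exceeds lam. *)
Definition second_eigenvalue_le (P : 'M[R]_n) (lam : R) : Prop :=
  forall rs : seq R, char_poly P = \prod_(r <- rs) ('X - r%:P) ->
    (count (fun r : R => (lam < r)%R) rs <= 1)%N.

Definition occupation (P : 'M[R]_n) (gamma : R) (z s : 'I_n) : R :=
  (1 - gamma) * limn (fun N : nat => \sum_(t < N) gamma ^+ t * (P ^+ t) z s).

Definition tv_occupation (P : 'M[R]_n) (gamma : R) (z z' : 'I_n) : R :=
  2^-1 * \sum_s `| occupation P gamma z s - occupation P gamma z' s |.

End MDP.

(* The difference of the two occupation measures is (1 - gamma) D,
   where D = (e_z - e_z') (I - gamma P)^-1 has total mass zero.  Reversibility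
   makes S = Q P Q^-1, Q = diag (sqrt p), symmetric, with sqrt p as an eigenvector
   for the eigenvalue 1; by the spectral theorem and the bound on the second
   eigenvalue, the quadratic form of S is at most lam on the orthogonal
   complement of sqrt p.  In the weighted norm |v|^2 = sum_s v_s^2 / p_s the map
   I - gamma P is therefore bounded below by 1 - gamma lam on mass-zero vectors,
   so (1 - gamma lam) |D| <= |e_z - e_z'| <= sqrt (2 / pmin), and Cauchy-Schwarz
   gives sum_s |D_s| <= |D|.  Finally the hypothesis on gamma implies
   1 - gamma <= pmin eps (1 - gamma lam), which turns this into TV <= eps. *)

From HB Require Import structures.
From mathcomp Require Import all_boot all_order all_algebra.
From mathcomp Require Import all_classical all_reals all_analysis.
From mathcomp Require Import complex.
From mathcomp Require Import ring lra.
Set Implicit Arguments. Unset Strict Implicit. Unset Printing Implicit Defensive.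
Import Order.TTheory GRing.Theory Num.Theory numFieldNormedType.Exports.
Local Open Scope ring_scope.

Lemma cauchy_schwarz_sum (R : realFieldType) n (a b : 'I_n -> R) :
  (\sum_i a i * b i) ^+ 2 <= (\sum_i a i ^+ 2) * (\sum_i b i ^+ 2).
Proof.
have lagrange : 0 <= \sum_i \sum_j (a i * b j - a j * b i) ^+ 2.
  by apply: sumr_ge0 => i _; apply: sumr_ge0 => j _; exact: sqr_ge0.
rewrite (eq_bigr (fun i => a i ^+ 2 * \sum_j b j ^+ 2 + b i ^+ 2 * \sum_j a j ^+ 2
   - 2 * (a i * b i) * \sum_j a j * b j)) in lagrange; last first.
  move=> i _; rewrite !mulr_sumr -big_split -sumrB /=.
  by apply: eq_bigr => j _; ring.
rewrite sumrB big_split -!mulr_suml /= -mulr_sumr in lagrange.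
nra.
Qed.

Lemma row_mul_trE (R : nzRingType) n (u v : 'rV[R]_n) :
  (u *m v^T) 0 0 = \sum_i u 0 i * v 0 i.
Proof. by rewrite mxE; apply: eq_bigr => i _; rewrite mxE. Qed.

Lemma cauchy_schwarz_row (R : realFieldType) n (u v : 'rV[R]_n) :
  ((u *m v^T) 0 0) ^+ 2 <= (u *m u^T) 0 0 * (v *m v^T) 0 0.
Proof.
rewrite !row_mul_trE.
under [X in _ <= X * _]eq_bigr do rewrite -expr2.
under [X in _ <= _ * X]eq_bigr do rewrite -expr2.
exact: cauchy_schwarz_sum.
Qed.

Lemma sqr_sum_norm_le (R : rcfType) n (v w : 'I_n -> R) :
  (forall s, 0 < w s) -> (\sum_s `|v s|) ^+ 2 <= (\sum_s w s) * \sum_s v s ^+ 2 / w s.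
Proof.
move=> w_gt0; have sqrt_w_neq0 s : Num.sqrt (w s) != 0 by rewrite gt_eqF ?sqrtr_gt0.
have sqrt_wK s : Num.sqrt (w s) ^+ 2 = w s by rewrite sqr_sqrtr // ltW.
have -> : \sum_s `|v s| = \sum_s Num.sqrt (w s) * (`|v s| / Num.sqrt (w s)).
  by apply: eq_bigr => s _; rewrite mulrC mulfVK.
have -> : \sum_s w s = \sum_s Num.sqrt (w s) ^+ 2.
  by apply: eq_bigr => s _; rewrite sqrt_wK.
have -> : \sum_s v s ^+ 2 / w s = \sum_s (`|v s| / Num.sqrt (w s)) ^+ 2.
  by apply: eq_bigr => s _; rewrite expr_div_n sqrt_wK real_normK ?num_real.
exact: cauchy_schwarz_sum.
Qed.

Lemma card_count (T : finType) (P : pred T) : #|P| = count P (index_enum T).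
Proof. by rewrite -sum1_count sum1_card. Qed.

Section Stochastic.
Variables (R : realType) (n : nat).
Implicit Types (P Q : 'M[R]_n) (v : 'rV[R]_n).

Lemma sum_row_mulmx_stochastic P v :
  stochastic_mx P -> \sum_j (v *m P) 0 j = \sum_j v 0 j.
Proof.
move=> [_ P1]; under eq_bigr do rewrite mxE.
rewrite exchange_big /=; apply: eq_bigr => i _.
by rewrite -mulr_sumr P1 mulr1.
Qed.

Lemma stochastic_mx1 : stochastic_mx (1%:M : 'M[R]_n).
Proof.
split=> [i j|i]; first by rewrite mxE ler0n.
by rewrite (bigD1 i) //= big1 ?mxE ?eqxx ?addr0 // => j /negbTE ji; rewrite mxE eq_sym ji.
Qed.

Lemma stochastic_mxM P Q : stochastic_mx P -> stochastic_mx Q -> stochastic_mx (P *m Q).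
Proof.
move=> [P0 P1] Q_stoch; have [Q0 _] := Q_stoch.
split=> [i j|i]; first by rewrite mxE; apply: sumr_ge0 => k _; apply: mulr_ge0.
rewrite -[RHS](P1 i); have := sum_row_mulmx_stochastic (row i P) Q_stoch.
by under eq_bigr do rewrite -row_mul mxE; under [in RHS]eq_bigr do rewrite mxE.
Qed.

Lemma stochastic_mx_pow P t : stochastic_mx P -> stochastic_mx (P ^+ t).
Proof.
move=> P_stoch; elim: t => [|t IHt]; first exact: stochastic_mx1.
by rewrite exprSr -mulmxE; exact: stochastic_mxM.
Qed.

Lemma stochastic_mx_le1 P i j : stochastic_mx P -> P i j <= 1.
Proof.
move=> [P0 P1]; rewrite -(P1 i) (bigD1 j) //= lerDl.
by apply: sumr_ge0 => k _.
Qed.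

End Stochastic.

Lemma induced_chain_stochastic (R : realType) n m (K : 'I_m -> 'M[R]_n) (pi : 'M[R]_(n, m)) :
  mdp_kernel K -> stochastic_mx pi -> stochastic_mx (induced_chain K pi).
Proof.
move=> K_stoch [pi_ge0 pi_sum1]; split=> [i j|i].
  by rewrite mxE; apply: sumr_ge0 => a _; rewrite mulr_ge0 ?(K_stoch a).1.
under eq_bigr do rewrite mxE.
rewrite exchange_big /=; under eq_bigr do rewrite -mulr_sumr (K_stoch _).2 mulr1.
exact: pi_sum1.
Qed.

Definition resolvent (R : realType) n (P : 'M[R]_n) (gamma : R) : 'M[R]_n :=
  \matrix_(z, s) limn (fun N => \sum_(t < N) gamma ^+ t * (P ^+ t) z s).

Lemma occupationE (R : realType) n (P : 'M[R]_n) gamma z s :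
  occupation P gamma z s = (1 - gamma) * resolvent P gamma z s.
Proof. by rewrite mxE. Qed.

Section Resolvent.
Variables (R : realType) (n : nat) (P : 'M[R]_n) (gamma : R).
Hypotheses (P_stoch : stochastic_mx P) (gamma_ge0 : 0 <= gamma) (gamma_lt1 : gamma < 1).
Local Notation L := (resolvent P gamma).

Lemma cvgn_discounted_sum z s :
  cvgn (fun N => \sum_(t < N) gamma ^+ t * (P ^+ t) z s).
Proof.
have Pt_stoch t := stochastic_mx_pow t P_stoch.
have gamma1_gt0 : 0 < 1 - gamma by rewrite subr_gt0.
apply: nondecreasing_is_cvgn.
  apply/nondecreasing_seqP => N; rewrite big_ord_recr /= lerDl.
  by rewrite mulr_ge0 ?exprn_ge0 //; exact: (Pt_stoch N).1.
exists (1 - gamma)^-1 => _ [N _ <-].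
apply: (le_trans (y := \sum_(t < N) gamma ^+ t)).
  apply: ler_sum => t _; rewrite ler_piMr ?exprn_ge0 //.
  exact: stochastic_mx_le1.
rewrite -(ler_pM2l gamma1_gt0) divff ?gt_eqF // -opprB mulNr -subrX1 opprB.
by rewrite lerBlDr lerDl exprn_ge0.
Qed.

Lemma resolventE : L = 1%:M + gamma *: (L *m P).
Proof.
apply/matrixP => z s; rewrite !mxE.
under [X in _ * X]eq_bigr do rewrite mxE.
set u := fun k N => \sum_(t < N) gamma ^+ t * (P ^+ t) z k.
have u_rec N : u s N.+1 = (z == s)%:R + gamma * \sum_k u k N * P k s.
  rewrite /u big_ord_recl /= expr0 mul1r mxE mulr_sumr.
  under [in RHS]eq_bigr do rewrite mulr_suml mulr_sumr.
  congr (_ + _); rewrite exchange_big /=; apply: eq_bigr => t _.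
  rewrite /bump add1n exprS exprSr -mulmxE mxE mulr_sumr.
  by apply: eq_bigr => k _; ring.
have cvg_shift : (u s n.+1 @[n --> \oo] --> limn (u s))%classic.
  by rewrite (cvg_shiftS (u s)); exact: cvgn_discounted_sum.
have cvg_rec : (u s n.+1 @[n --> \oo] -->
    (z == s)%:R + gamma * \sum_k limn (u k) * P k s)%classic.
  under eq_fun do rewrite u_rec.
  apply: cvgD; first exact: cvg_cst.
  apply: cvgM; first exact: cvg_cst.
  apply: cvg_big => [|k _]; first exact: add_continuous.
  by apply: cvgM; [exact: cvgn_discounted_sum | exact: cvg_cst].
exact: cvg_unique cvg_shift cvg_rec.
Qed.

Lemma resolvent_rowE z : row z L = delta_mx 0 z + gamma *: (row z L *m P).
Proof. by rewrite {1}resolventE linearD linearZ /= row1 row_mul. Qed.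

Lemma sum_resolvent_row z : (1 - gamma) * \sum_s L z s = 1.
Proof.
have := congr1 (fun v : 'rV_n => \sum_s v 0 s) (resolvent_rowE z).
(* Hide the body of the resolvent from mxE, which would unfold it. *)
set M := L; clearbody M.
rewrite /= [RHS](eq_bigr (fun s => 1%:M z s + gamma * (row z M *m P) 0 s)); last first.
  by move=> s _; rewrite !mxE eqxx andTb eq_sym.
rewrite big_split /= -mulr_sumr sum_row_mulmx_stochastic // (stochastic_mx1 _ _).2.
under eq_bigr do rewrite mxE.
by rewrite mulrBl mul1r => {1}->; ring.
Qed.

Lemma resolvent_row_diffE z z' :
  row z L - row z' L = (delta_mx 0 z - delta_mx 0 z') + gamma *: ((row z L - row z' L) *m P).
Proof.
rewrite {1}resolvent_rowE {1}(resolvent_rowE z').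
by rewrite mulmxBl scalerBr opprD addrACA.
Qed.

Lemma sum_resolvent_row_diff z z' : \sum_s (row z L - row z' L) 0 s = 0.
Proof.
have gamma1_neq0 : 1 - gamma != 0 by rewrite subr_eq0 eq_sym lt_eqF.
have := sum_resolvent_row z; have := sum_resolvent_row z'.
set M := L; clearbody M => sum_z' sum_z.
under eq_bigr do rewrite !mxE.
by rewrite sumrB; apply/eqP; rewrite subr_eq0 -(inj_eq (mulfI gamma1_neq0)) sum_z sum_z'.
Qed.

Lemma tv_occupation_resolvent z z' :
  tv_occupation P gamma z z' = 2^-1 * ((1 - gamma) * \sum_s `|(row z L - row z' L) 0 s|).
Proof.
rewrite /tv_occupation [X in _ = _ * X]mulr_sumr; congr (_ * _); apply: eq_bigr => s _.
by rewrite !occupationE -mulrBr normrM ger0_norm ?subr_ge0 ?ltW // !mxE.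
Qed.

End Resolvent.

Lemma char_poly_similar (R : comNzRingType) n (W V M : 'M[R]_n) :
  W *m V = 1%:M -> char_poly (W *m M *m V) = char_poly M.
Proof.
move=> WV; rewrite /char_poly.
have -> : char_poly_mx (W *m M *m V) =
    map_mx polyC W *m char_poly_mx M *m map_mx polyC V.
  rewrite /char_poly_mx mulmxBr mulmxBl !map_mxM; congr (_ - _).
  by rewrite mul_mx_scalar -scalemxAl -map_mxM WV map_mx1 scalemx1.
rewrite !det_mulmx !det_map_mx mulrC mulrA -rmorphM -det_mulmx (mulmx1C WV).
by rewrite det1 rmorph1 mul1r.
Qed.

Section Symmetrization.
Variables (R : realType) (n : nat) (P : 'M[R]_n) (p : 'rV[R]_n).
Hypotheses (p_gt0 : forall s, 0 < p 0 s) (pP : p *m P = p) (P_rev : reversible_wrt P p).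

Let q := map_mx Num.sqrt p.
Let qV := map_mx (fun x => (Num.sqrt x)^-1) p.

Definition symmetrized : 'M[R]_n := diag_mx q *m P *m diag_mx qV.

Let sqrt_p_neq0 s : Num.sqrt (p 0 s) != 0.
Proof. by rewrite gt_eqF // sqrtr_gt0. Qed.

Lemma diag_sqrt_mulV : diag_mx q *m diag_mx qV = 1%:M.
Proof.
by apply/matrixP => i j; rewrite mul_diag_mx !mxE mulrnAr mulfV.
Qed.

Lemma diag_sqrt_Vmul : diag_mx qV *m diag_mx q = 1%:M.
Proof. by rewrite -diag_mx_comm diag_sqrt_mulV. Qed.

Lemma symmetrized_sym : symmetrized^T = symmetrized.
Proof.
apply/matrixP => i j; rewrite mxE /symmetrized !mul_mx_diag !mul_diag_mx !mxE.
have sqrt_pK s : Num.sqrt (p 0 s) ^+ 2 = p 0 s by rewrite sqr_sqrtr // ltW.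
have E a b : Num.sqrt (p 0 a) * P a b / Num.sqrt (p 0 b) =
    Num.sqrt (p 0 a) ^+ 2 * P a b / (Num.sqrt (p 0 a) * Num.sqrt (p 0 b)).
  by field; rewrite !sqrt_p_neq0.
by rewrite [LHS]E [RHS]E !sqrt_pK P_rev [in LHS](mulrC (Num.sqrt _)).
Qed.

Lemma sqrt_mul_symmetrized : q *m symmetrized = q.
Proof.
have qQ : q *m diag_mx q = p.
  by apply/rowP => s; rewrite mul_mx_diag !mxE -expr2 sqr_sqrtr // ltW.
have pQV : p *m diag_mx qV = q.
  apply/rowP => s; rewrite mul_mx_diag !mxE.
  by rewrite -{1}(sqr_sqrtr (ltW (p_gt0 s))) expr2 mulfK.
by rewrite /symmetrized !mulmxA qQ pP pQV.
Qed.

Lemma diagV_mul_symmetrized : diag_mx qV *m symmetrized = P *m diag_mx qV.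
Proof. by rewrite /symmetrized !mulmxA diag_sqrt_Vmul mul1mx. Qed.

Lemma char_poly_symmetrized : char_poly symmetrized = char_poly P.
Proof. exact: char_poly_similar diag_sqrt_mulV. Qed.

Lemma diagV_norm (v : 'rV[R]_n) :
  ((v *m diag_mx qV) *m (v *m diag_mx qV)^T) 0 0 = \sum_s v 0 s ^+ 2 / p 0 s.
Proof.
rewrite row_mul_trE; apply: eq_bigr => s _; rewrite mul_mx_diag !mxE.
by rewrite -expr2 expr_div_n sqr_sqrtr // ltW.
Qed.

Lemma diagV_mul_sqrt_tr (v : 'rV[R]_n) : (v *m diag_mx qV) *m q^T = (\sum_s v 0 s)%:M.
Proof.
rewrite [LHS]mx11_scalar row_mul_trE; congr _%:M; apply: eq_bigr => s _.
by rewrite mul_mx_diag !mxE mulfVK.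
Qed.

End Symmetrization.

(* MathComp's spectral theorem is stated over a numClosedFieldType, so real
   symmetric matrices are diagonalised over R[i]. *)
Section RealSymmetric.

Local Open Scope sesquilinear_scope.
Local Notation "A %:CM" := (map_mx (real_complex _) A) (at level 2, format "A %:CM").

Lemma map_real_trC (R : realType) m p (A : 'M[R]_(m, p)) :
  A%:CM^t* = A^T%:CM.
Proof. by apply/matrixP => i j; rewrite !mxE; exact: conjc_real. Qed.

Lemma unitary_trC_mul (C : numClosedFieldType) n (U : 'M[C]_n) :
  U \is unitarymx -> U^t* *m U = 1%:M.
Proof. by move=> U_unitary; rewrite -[U^t*]mul1mx mulmxKtV. Qed.

Lemma unitary_change_basis (C : numClosedFieldType) m n p (U M : 'M[C]_n)
    (v : 'M[C]_(m, n)) (w : 'M[C]_(p, n)) :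
  U \is unitarymx ->
  (v *m U^t*) *m (U *m M *m U^t*) *m (w *m U^t*)^t* = v *m M *m w^t*.
Proof.
by move=> U_unitary; rewrite trmx_mul map_mxM trmxCK !mulmxA !mulmxKtV.
Qed.

Lemma realsym_spectral (R : realType) n (S : 'M[R]_n) : S^T = S ->
  exists2 U : 'M[R[i]]_n, U \is unitarymx &
    exists d : 'rV[R]_n, S%:CM = U^t* *m diag_mx d%:CM *m U.
Proof.
move=> S_sym; set A := S%:CM.
have A_herm : A \is hermsymmx.
  by apply/is_hermitianmxP; rewrite expr0 scale1r map_real_trC S_sym.
have /orthomx_spectralP A_eq := hermitian_normalmx A_herm.
have /mxOverP d_real := hermitian_spectral_diag_real A_herm.
exists (spectralmx A); first exact: spectral_unitarymx.
exists (map_mx (@complex.Re R) (spectral_diag A)).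
have -> : (map_mx (@complex.Re R) (spectral_diag A))%:CM = spectral_diag A.
  by apply/rowP => k; rewrite !mxE RRe_real // d_real.
by rewrite -invmx_unitary ?spectral_unitarymx.
Qed.

Lemma char_poly_unitary_diag (R : realType) n (S : 'M[R]_n) (U : 'M[R[i]]_n)
    (d : 'rV[R]_n) :
  U \is unitarymx -> S%:CM = U^t* *m diag_mx d%:CM *m U ->
  char_poly S = \prod_k ('X - (d 0 k)%:P).
Proof.
move=> U_unitary SE; apply: (@map_poly_inj _ _ (real_complex R)).
rewrite map_char_poly SE char_poly_similar ?unitary_trC_mul //.
rewrite char_poly_trig ?diag_mx_is_trig // rmorph_prod; apply: eq_bigr => k _.
by rewrite rmorphB /= map_polyX map_polyC !mxE eqxx mulr1n.
Qed.

Lemma second_eigenvalue_le_uniq (R : realType) n (S : 'M[R]_n) (lam : R) (d : 'rV[R]_n) :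
  second_eigenvalue_le S lam -> char_poly S = \prod_k ('X - (d 0 k)%:P) ->
  {in [pred k | lam < d 0 k] &, forall k1 k2, k1 = k2}.
Proof.
move=> S_lam S_char k1 k2 k1_top k2_top.
suff /card_le1_eqP top_le1 : (#|[pred k | (lam < d 0 k)%R]| <= 1)%N.
  exact: top_le1.
by rewrite card_count -(count_map (fun k => d 0 k)); apply: S_lam; rewrite big_map.
Qed.

Lemma row_mul_trCE (C : numClosedFieldType) n (e v w : 'rV[C]_n) :
  (v *m diag_mx e *m w^t*) 0 0 = \sum_k e 0 k * (v 0 k * (w 0 k)^*).
Proof.
rewrite mul_mx_diag mxE; apply: eq_bigr => k _.
by rewrite !mxE mulrCA mulrA.
Qed.

(* Only one coordinate can carry an eigenvalue above lam; the eigenvector c for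
   the eigenvalue 1 lives there, and b is orthogonal to c. *)
Lemma rayleigh_diag (R : realType) n (d : 'rV[R]_n) (b c : 'rV[R[i]]_n) (lam : R) :
  {in [pred k | lam < d 0 k] &, forall k1 k2, k1 = k2} -> lam < 1 ->
  c *m diag_mx d%:CM = c -> c != 0 -> b *m c^t* = 0 ->
  \sum_k d%:CM 0 k * (b 0 k * (b 0 k)^*) <= real_complex R lam * \sum_k b 0 k * (b 0 k)^*.
Proof.
move=> top_uniq lam_lt1 c_eigen /rV0Pn[j cj_neq0] bc.
have c_top k : c 0 k != 0 -> lam < d 0 k.
  move=> ck; have /rowP/(_ k) := c_eigen; rewrite mul_mx_diag !mxE.
  by rewrite -[RHS]mulr1 => /(mulfI ck)/complexI ->.
have bj : b 0 j = 0.
  have /matrixP/(_ 0 0) := bc; rewrite mxE (bigD1 j) //= big1 ?addr0.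
    by rewrite !mxE => /eqP; rewrite mulf_eq0 conjC_eq0 (negPf cj_neq0) orbF => /eqP.
  move=> k kj; rewrite !mxE; apply/eqP; rewrite mulf_eq0 conjC_eq0; apply/orP; right.
  apply: contraNT kj => ck; apply/eqP; exact: top_uniq (c_top _ ck) (c_top _ cj_neq0).
rewrite mulr_sumr; apply: ler_sum => k _; rewrite mxE.
have [d_top|d_le] := ltrP lam (d 0 k).
  by rewrite (top_uniq _ _ d_top (c_top _ cj_neq0)) bj mul0r !mulr0.
by rewrite ler_wpM2r ?mul_conjC_ge0 // lecR.
Qed.

Lemma rayleigh_orthogonal (R : realType) n (S : 'M[R]_n) (u y : 'rV[R]_n) (lam : R) :
  S^T = S -> u *m S = u -> u != 0 -> second_eigenvalue_le S lam -> lam < 1 ->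
  y *m u^T = 0 -> (y *m S *m y^T) 0 0 <= lam * (y *m y^T) 0 0.
Proof.
move=> S_sym uS u_neq0 S_lam lam_lt1 yu.
have [U U_unitary [d SE]] := realsym_spectral S_sym.
have top_uniq := second_eigenvalue_le_uniq S_lam (char_poly_unitary_diag U_unitary SE).
have /unitarymxP UUt := U_unitary.
have in_basis (v : 'rV[R]_n) (M : 'M[R]_n) (w : 'rV[R]_n) : (v *m M *m w^T)%:CM =
    (v%:CM *m U^t*) *m (U *m M%:CM *m U^t*) *m (w%:CM *m U^t*)^t*.
  by rewrite unitary_change_basis // map_real_trC !map_mxM.
have S_diag : U *m S%:CM *m U^t* = diag_mx d%:CM.
  by rewrite SE !mulmxA UUt mul1mx -mulmxA UUt mulmx1.
set b := y%:CM *m U^t*; set c := u%:CM *m U^t*.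
have quadE (M : 'M[R]_n) e : U *m M%:CM *m U^t* = diag_mx e ->
    real_complex R ((y *m M *m y^T) 0 0) = \sum_k e 0 k * (b 0 k * (b 0 k)^*).
  by move=> M_diag; rewrite -row_mul_trCE -M_diag -in_basis [in RHS]mxE.
have yy : real_complex R ((y *m y^T) 0 0) = \sum_k b 0 k * (b 0 k)^*.
  rewrite -{1}(mulmx1 y) (quadE 1%:M (const_mx 1)).
    by apply: eq_bigr => k _; rewrite mxE mul1r.
  by rewrite map_mx1 mulmx1 UUt diag_const_mx.
have c_eigen : c *m diag_mx d%:CM = c.
  by rewrite -S_diag /c !mulmxA mulmxKtV // -map_mxM uS.
have c_neq0 : c != 0.
  apply: contraNneq u_neq0 => c0; rewrite -(map_mx_eq0 (real_complex R)).
  by rewrite -[u%:CM](mulmxKtV _ U_unitary) // -/c c0 !mul0mx.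
have bc : b *m c^t* = 0.
  have := in_basis y 1%:M u.
  by rewrite mulmx1 yu map_mx0 map_mx1 mulmx1 UUt mulmx1 => <-.
rewrite -lecR rmorphM /= (quadE S _ S_diag) yy.
exact: rayleigh_diag top_uniq lam_lt1 c_eigen c_neq0 bc.
Qed.

End RealSymmetric.

Lemma resolvent_norm_bound (R : realFieldType) n (S : 'M[R]_n) (g x : 'rV[R]_n)
    (lam gamma : R) :
  0 <= gamma -> gamma * lam <= 1 ->
  (g *m S *m g^T) 0 0 <= lam * (g *m g^T) 0 0 -> g - gamma *: (g *m S) = x ->
  (1 - gamma * lam) ^+ 2 * (g *m g^T) 0 0 <= (x *m x^T) 0 0.
Proof.
move=> gamma_ge0 gamma_lam quad gSx.
have sqr_norm_ge0 (v : 'rV[R]_n) : 0 <= (v *m v^T) 0 0.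
  by rewrite row_mul_trE sumr_ge0 // => i _; rewrite -expr2 sqr_ge0.
have xg_ge : (1 - gamma * lam) * (g *m g^T) 0 0 <= (x *m g^T) 0 0.
  rewrite -gSx mulmxBl -scalemxAl [X in _ <= X]mxE [X in _ <= _ + X]mxE.
  rewrite [X in _ <= _ - X]mxE; have := ler_wpM2l gamma_ge0 quad; lra.
have cs := cauchy_schwarz_row x g; have G_ge0 := sqr_norm_ge0 g.
set G := (g *m g^T) 0 0 in xg_ge cs G_ge0 *; set a := 1 - gamma * lam in xg_ge *.
have [->|G_neq0] := eqVneq G 0; first by rewrite mulr0 sqr_norm_ge0.
have aG_ge0 : 0 <= a * G by rewrite mulr_ge0 // subr_ge0.
have : (a * G) ^+ 2 <= (x *m x^T) 0 0 * G.
  by apply: le_trans cs; rewrite lerXn2r ?nnegrE ?(le_trans aG_ge0).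
by rewrite exprMn [G ^+ 2]expr2 mulrA ler_pM2r // lt_neqAle eq_sym G_neq0.
Qed.

Lemma reversible_resolvent_bound (R : realType) n (P : 'M[R]_n) (p D f : 'rV[R]_n)
    (lam gamma : R) :
  (forall s, 0 < p 0 s) -> p *m P = p -> reversible_wrt P p ->
  second_eigenvalue_le P lam -> lam < 1 -> 0 <= gamma -> gamma * lam <= 1 ->
  D = f + gamma *: (D *m P) -> \sum_s D 0 s = 0 ->
  (1 - gamma * lam) ^+ 2 * \sum_s D 0 s ^+ 2 / p 0 s <= \sum_s f 0 s ^+ 2 / p 0 s.
Proof.
move=> p_gt0 pP P_rev P_lam lam_lt1 gamma_ge0 gamma_lam D_eq sum_D.
have [s0 _|no_state] := pickP (@predT 'I_n); last first.
  by rewrite !big1 ?mulr0 // => s; have := no_state s.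
set qV := map_mx (fun x => (Num.sqrt x)^-1) p.
set g := D *m diag_mx qV; set x := f *m diag_mx qV.
have g_eq : g - gamma *: (g *m symmetrized P p) = x.
  have Df : D - gamma *: (D *m P) = f by rewrite {1}D_eq addrK.
  by rewrite /g /x -Df mulmxBl -scalemxAl -!mulmxA diagV_mul_symmetrized.
have g_perp : g *m (map_mx Num.sqrt p)^T = 0.
  by rewrite /g diagV_mul_sqrt_tr // sum_D raddf0.
have q_neq0 : map_mx Num.sqrt p != 0.
  by apply/rV0Pn; exists s0; rewrite mxE sqrtr_eq0 -ltNge p_gt0.
have S_lam : second_eigenvalue_le (symmetrized P p) lam.
  by rewrite /second_eigenvalue_le char_poly_symmetrized.
have quad := rayleigh_orthogonal (symmetrized_sym p_gt0 P_rev)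
  (sqrt_mul_symmetrized p_gt0 pP) q_neq0 S_lam lam_lt1 g_perp.
rewrite -!(diagV_norm p_gt0).
exact: resolvent_norm_bound gamma_ge0 gamma_lam quad g_eq.
Qed.

Section OccupationBound.
Variables (R : realType) (n : nat) (P : 'M[R]_n) (p : 'rV[R]_n) (pmin lam gamma : R).
Hypotheses (P_stoch : stochastic_mx P) (p_stat : stationary_distr P p)
  (P_rev : reversible_wrt P p) (pmin_le : forall s, pmin <= p 0 s) (pmin_gt0 : 0 < pmin)
  (P_lam : second_eigenvalue_le P lam) (lam_lt1 : lam < 1) (gamma01 : 0 < gamma < 1).

Let p_gt0 s : 0 < p 0 s. Proof. exact: lt_le_trans pmin_gt0 (pmin_le s). Qed.

Let gamma_lam_lt1 : gamma * lam < 1.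
Proof.
have /andP[gamma_gt0 gamma_lt1] := gamma01.
have : 0 < gamma * (1 - lam) by rewrite mulr_gt0 // subr_gt0.
lra.
Qed.

Lemma delta_diff_norm z z' :
  pmin * \sum_s (delta_mx 0 z - delta_mx 0 z' : 'rV[R]_n) 0 s ^+ 2 / p 0 s <= 2.
Proof.
set f : 'rV[R]_n := delta_mx 0 z - delta_mx 0 z'.
have f_sqr s : f 0 s ^+ 2 <= 1%:M z s + 1%:M z' s.
  rewrite !mxE eqxx /= !(eq_sym s).
  by case: (z == s); case: (z' == s); rewrite /= ?mulr1n ?mulr0n expr2; lra.
rewrite mulr_sumr; apply: (@le_trans _ _ (\sum_s (1%:M z s + 1%:M z' s))).
  apply: ler_sum => s _; rewrite mulrA ler_pdivrMr //.
  have := f_sqr s; have := pmin_le s; have := p_gt0 s; have := sqr_ge0 (f 0 s); nra.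
by rewrite big_split /= !(stochastic_mx1 _ _).2; lra.
Qed.

Lemma tv_occupation_bound z z' :
  pmin * ((1 - gamma * lam) * tv_occupation P gamma z z') ^+ 2 <= (1 - gamma) ^+ 2 / 2.
Proof.
have [_ [p_sum1 pP]] := p_stat.
have /andP[gamma_gt0 gamma_lt1] := gamma01.
have gamma_ge0 := ltW gamma_gt0.
rewrite (tv_occupation_resolvent P gamma_lt1).
have := resolvent_row_diffE P_stoch gamma_ge0 gamma_lt1 z z'.
have := sum_resolvent_row_diff P_stoch gamma_ge0 gamma_lt1 z z'.
set D := row z _ - row z' _; clearbody D => sum_D D_eq.
have l2 := reversible_resolvent_bound p_gt0 pP P_rev P_lam lam_lt1 gamma_ge0
  (ltW gamma_lam_lt1) D_eq sum_D.
have l1 := @sqr_sum_norm_le _ _ (fun s => D 0 s) (fun s => p 0 s) p_gt0.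
rewrite /= p_sum1 mul1r in l1.
have f_norm := delta_diff_norm z z'.
set T := \sum_s `|D 0 s| in l1 *.
set a := 1 - gamma * lam in l2 *.
have key : pmin * (a ^+ 2 * T ^+ 2) <= 2.
  apply: le_trans f_norm; rewrite ler_pM2l //; apply: le_trans l2.
  by rewrite ler_wpM2l ?sqr_ge0.
have -> : pmin * (a * (2^-1 * ((1 - gamma) * T))) ^+ 2 =
    (1 - gamma) ^+ 2 / 4 * (pmin * (a ^+ 2 * T ^+ 2)) by field.
have -> : (1 - gamma) ^+ 2 / 2 = (1 - gamma) ^+ 2 / 4 * 2 by field.
by rewrite ler_wpM2l // divr_ge0 ?sqr_ge0.
Qed.

Lemma tv_occupation_le eps z z' :
  1 - gamma <= pmin * eps * (1 - gamma * lam) -> tv_occupation P gamma z z' <= eps.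
Proof.
move=> gamma_le; have [p_ge0 [p_sum1 _]] := p_stat.
have /andP[_ gamma_lt1] := gamma01.
have pmin_le1 : pmin <= 1.
  apply: le_trans (pmin_le z) _; rewrite -p_sum1 (bigD1 z) //= lerDl.
  by apply: sumr_ge0 => s _.
have tv_ge0 : 0 <= tv_occupation P gamma z z'.
  by rewrite mulr_ge0 ?invr_ge0 ?ler0n // sumr_ge0.
set v := tv_occupation P gamma z z' in tv_ge0 *.
have := tv_occupation_bound z z'; rewrite -/v.
set a := 1 - gamma * lam in gamma_le *; move=> bound.
have a_gt0 : 0 < a by rewrite subr_gt0.
have eps_gt0 : 0 < eps.
  have : 0 < pmin * a * eps by rewrite mulrAC (lt_le_trans _ gamma_le) // subr_gt0.
  by rewrite pmulr_rgt0 // mulr_gt0.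
have gamma1_ge0 : 0 <= 1 - gamma by rewrite subr_ge0 ltW.
have gamma_sqr : (1 - gamma) ^+ 2 <= (pmin * eps * a) ^+ 2.
  by rewrite lerXn2r // nnegrE // (le_trans gamma1_ge0 gamma_le).
have v_sqr : v ^+ 2 <= pmin * eps ^+ 2 / 2.
  rewrite -(ler_pM2l (_ : 0 < pmin * a ^+ 2)) ?mulr_gt0 ?exprn_gt0 //.
  have -> : pmin * a ^+ 2 * (pmin * eps ^+ 2 / 2) = (pmin * eps * a) ^+ 2 / 2 by ring.
  rewrite -[X in X <= _]mulrA -exprMn; apply: (le_trans bound).
  by rewrite ler_wpM2r ?invr_ge0 ?ler0n.
rewrite -(ler_pXn2r (_ : 0 < 2)%N) ?nnegrE ?tv_ge0 ?(ltW eps_gt0) //.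
apply: (le_trans v_sqr).
have := sqr_ge0 eps; nra.
Qed.

End OccupationBound.

Lemma discount_condition (R : realFieldType) (lam pmin eps gamma : R) :
  lam < 1 -> 0 < pmin * eps -> 0 < gamma < 1 ->
  (1 - pmin * eps) / (1 - lam * pmin * eps) <= gamma ->
  1 - gamma <= pmin * eps * (1 - gamma * lam).
Proof.
move=> lam_lt1 t_gt0 /andP[gamma_gt0 gamma_lt1]; rewrite -mulrA => cond.
set t := pmin * eps in t_gt0 cond *.
have gamma_lam : gamma * lam < gamma.
  have : 0 < gamma * (1 - lam) by rewrite mulr_gt0 // subr_gt0.
  lra.
have [t_ge1|t_lt1] := leP 1 t.
  by rewrite -[1 - gamma]mul1r; apply: ler_pM; lra.
have lam_t : lam * t < 1.
  have : 0 < t * (1 - lam) by rewrite mulr_gt0 // subr_gt0.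
  lra.
move: cond; rewrite ler_pdivrMr ?subr_gt0 //; lra.
Qed.

Theorem proposition3 (R : realType) (n m : nat)
    (K : 'I_m -> 'M[R]_n)
    (allowed : 'M[R]_(n, m) -> Prop)
    (pst : 'M[R]_(n, m) -> 'rV[R]_n)
    (pmin lam eps gamma : R) :
  mdp_kernel K ->
  (forall pi, allowed pi -> stochastic_mx pi) ->
  (forall pi, allowed pi -> ergodic_mx (induced_chain K pi)) ->
  (forall pi, allowed pi -> stationary_distr (induced_chain K pi) (pst pi)) ->
  (forall pi, allowed pi -> reversible_wrt (induced_chain K pi) (pst pi)) ->
  (* pmin = min_{s, pi} p_pi(s) *)
  (forall pi s, allowed pi -> pmin <= pst pi 0 s) ->
  (exists pi s, allowed pi /\ pst pi 0 s = pmin) ->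
  lam < 1 ->
  (forall pi, allowed pi -> second_eigenvalue_le (induced_chain K pi) lam) ->
  0 < eps -> 0 < gamma < 1 ->
  (1 - pmin * eps) / (1 - lam * pmin * eps) <= gamma ->
  forall pi, allowed pi -> forall z z' : 'I_n,
    tv_occupation (induced_chain K pi) gamma z z' <= eps.
Proof.
move=> K_stoch pi_stoch _ p_stat P_rev pmin_le [pi0 [s0 [pi0_ok pmin_attained]]] lam_lt1
  P_lam eps_gt0 gamma01 cond pi pi_ok z z'.
have pmin_ge0 : 0 <= pmin by rewrite -pmin_attained; exact: (p_stat _ pi0_ok).1.
(* pmin = 0 would turn the hypothesis on gamma into 1 <= gamma. *)
have pmin_gt0 : 0 < pmin.
  rewrite lt_neqAle pmin_ge0 andbT; apply: contraTneq cond => <-.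
  by rewrite !(mul0r, mulr0, subr0) divr1 -ltNge; case/andP: gamma01.
apply: (tv_occupation_le (induced_chain_stochastic K_stoch (pi_stoch _ pi_ok))
  (p_stat _ pi_ok) (P_rev _ pi_ok) (fun s => pmin_le _ s pi_ok) pmin_gt0 (P_lam _ pi_ok)
  lam_lt1 gamma01 z z').
exact: discount_condition lam_lt1 (mulr_gt0 pmin_gt0 eps_gt0) gamma01 cond.
Qed.
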